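(* A reaction network $(X,\mathscr{R})$ admits an sf-instance if and only if it is conservative.
   Context: A reaction network (RN) $(X,\mathscr{R})$ consists of a finite non-empty set $X$ of species and a finite non-empty set $\mathscr{R}$ of reactions. Each reaction $r$ is given by stoichiometric coefficients $s^-_{xr},s^+_{xr}\in\mathbb{N}_0$. The stoichiometric matrix $S\in\mathbb{Z}^{X\times\mathscr{R}}$ has entries $S_{xr}=s^+_{xr}-s^-_{xr}$. The paper assumes throughout that RNs are closed: every reaction $r$ has $x,y$ with $S_{xr}<0<S_{yr}$. The RN is conservative if there is $m\in\mathbb{R}^X$ with all entries positive and $m^\top S=0$. A sum formula instance (sf-instance) is a matrix $A\in\mathbb{N}_0^{\mathcal{A}\times X}$, for some non-empty finite set $\mathcal{A}$ of ''atoms'', such that: - (i) every column of $A$ is nonzero; - (ii) $AS=0$. *)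

From HB Require Import structures.
From mathcomp Require Import all_boot all_order all_algebra.
From mathcomp Require Import Rstruct.
From Stdlib Require Rdefinitions.
Set Implicit Arguments. Unset Strict Implicit. Unset Printing Implicit Defensive.
Import Order.TTheory GRing.Theory Num.Theory.
Local Open Scope ring_scope.

Definition stoich (X Rn : finType) (sminus splus : X -> Rn -> nat) (x : X) (r : Rn) : int :=
  (splus x r)%:Z - (sminus x r)%:Z.

Definition closed_RN (X Rn : finType) (sminus splus : X -> Rn -> nat) : Prop :=
  forall r : Rn, exists x y : X,
    stoich sminus splus x r < 0 /\ 0 < stoich sminus splus y r.

Definition conservative (X Rn : finType) (sminus splus : X -> Rn -> nat) : Prop :=
  exists m : X -> Rdefinitions.R,
    (forall x, 0 < m x) /\
    (forall r : Rn, \sum_(x : X) m x * (stoich sminus splus x r)%:~R = 0).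

Definition is_sf_instance (X Rn : finType) (sminus splus : X -> Rn -> nat)
    (Atoms : finType) (a : Atoms -> X -> nat) : Prop :=
  (forall x : X, exists i : Atoms, a i x <> 0%N) /\
  (forall (i : Atoms) (r : Rn), \sum_(x : X) (a i x)%:Z * stoich sminus splus x r = 0).

Definition admits_sf_instance (X Rn : finType) (sminus splus : X -> Rn -> nat) : Prop :=
  exists (Atoms : finType) (a : Atoms -> X -> nat),
    (0 < #|Atoms|)%N /\ is_sf_instance sminus splus a.

From mathcomp Require Import all_boot all_order all_algebra.
From mathcomp Require Import reals Rstruct.

(* Summing the rows of an sf-instance gives a positive conservation law.
   Conversely, S has integer entries, so the real left kernel of S is spanned
   by rational vectors; a positive real m in it can be approximated by a
   rational kernel vector, which stays positive, and clearing denominators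
   turns it into a positive integer conservation law, i.e. an sf-instance with
   a single atom. *)

Set Implicit Arguments.
Unset Strict Implicit.
Unset Printing Implicit Defensive.
Import Order.TTheory GRing.Theory Num.Theory.
Local Open Scope ring_scope.

Lemma norm_row_mulmx_le (R : numDomainType) n p (u : 'rV[R]_n) (A : 'M[R]_(n, p))
    (d : R) (i : 'I_p) :
  (forall j, `|u 0 j| <= d) -> `|(u *m A) 0 i| <= d * \sum_j `|A j i|.
Proof.
move=> le_ud; rewrite mxE mulr_sumr; apply: le_trans (ler_norm_sum _ _ _) _.
by apply: ler_sum => j _; rewrite normrM ler_wpM2r.
Qed.

Lemma rat_approx (R : archiRealFieldType) (x e : R) :
  0 < e -> exists q : rat, `|ratr q - x| < e.
Proof.
move=> e_gt0; have /rat_in_itvoo[q] : x - e < x + e by rewrite ltrD2l gtrN.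
by rewrite in_itv /= -ltr_distlC distrC; exists q.
Qed.

Lemma rat_kermx_dense (R : archiRealFieldType) n p (S : 'M[rat]_(n, p))
    (v : 'rV[R]_n) (e : R) :
  v *m map_mx ratr S = 0 -> 0 < e ->
  exists2 w : 'rV[rat]_n, w *m S = 0 & forall i, `|ratr (w 0 i) - v 0 i| < e.
Proof.
move=> /sub_kermxP; rewrite -map_kermx => /submxP[c ->{v}] e_gt0.
set K := kermx S; set KR := map_mx ratr K.
pose B := 1 + \sum_j \sum_k `|KR j k|.
have col_lt_B i : \sum_j `|KR j i| < B.
  rewrite /B ltr_pwDl // ler_sum // => j _.
  by rewrite (bigD1 i) //= lerDl sumr_ge0.
have B_gt0 : 0 < B by rewrite ltr_wpDr // !sumr_ge0 // => *; rewrite sumr_ge0.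
have [q q_c] : exists q : 'rV[rat]_n, forall j, `|ratr (q 0 j) - c 0 j| < e / B.
  have /fin_all_exists[f f_c] j : exists r : rat, `|ratr r - c 0 j| < e / B.
    by apply: rat_approx; rewrite divr_gt0.
  by exists (\row_j f j) => j; rewrite mxE.
exists (q *m K); first by rewrite -mulmxA mulmx_ker mulmx0.
move=> i.
have -> : ratr ((q *m K) 0 i) - (c *m KR) 0 i = ((map_mx ratr q - c) *m KR) 0 i.
  by rewrite mulmxBl -map_mxM !mxE.
have le_eB j : `|(map_mx ratr q - c) 0 j| <= e / B by rewrite !mxE ltW.
apply: le_lt_trans (norm_row_mulmx_le KR i le_eB) _.
by rewrite -[ltRHS](mulfVK (lt0r_neq0 B_gt0)) ltr_pM2l ?divr_gt0.
Qed.

Lemma rat_kermx_pos (R : archiRealFieldType) n p (S : 'M[rat]_(n, p)) (v : 'rV[R]_n) :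
  v *m map_mx ratr S = 0 -> (forall i, 0 < v 0 i) ->
  exists2 w : 'rV[rat]_n, w *m S = 0 & forall i, 0 < w 0 i.
Proof.
move=> vS v_gt0; pose e := \big[Order.min/1]_i v 0 i.
have e_gt0 : 0 < e by apply: lt_bigmin => // i _.
have [w wS w_v] := rat_kermx_dense vS e_gt0.
exists w => // i; rewrite -(ltr0q R).
move: (w_v i); rewrite ltr_distl => /andP[+ _]; apply: le_lt_trans.
by rewrite subr_ge0 bigmin_le.
Qed.

Definition rowfun (R : Type) (X : finType) (f : X -> R) : 'rV[R]_#|X| :=
  \row_i f (enum_val i).

Definition mxfun (R : Type) (X Y : finType) (M : X -> Y -> R) : 'M[R]_(#|X|, #|Y|) :=
  \matrix_(i, j) M (enum_val i) (enum_val j).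

Lemma rowfun_mulmx (R : pzSemiRingType) (X Y : finType) (f : X -> R) (M : X -> Y -> R) y :
  (rowfun f *m mxfun M) 0 (enum_rank y) = \sum_x f x * M x y.
Proof.
rewrite mxE; under eq_bigr do rewrite !mxE enum_rankK.
by rewrite -(big_enum_val (fun x => f x * M x y)).
Qed.

Lemma pos_rat_left_kernel (R : archiRealFieldType) (X Y : finType)
    (M : X -> Y -> rat) (m : X -> R) :
  (forall x, 0 < m x) -> (forall y, \sum_x m x * ratr (M x y) = 0) ->
  exists2 w : X -> rat, (forall x, 0 < w x) & forall y, \sum_x w x * M x y = 0.
Proof.
move=> m_gt0 mM.
have vS : rowfun m *m map_mx ratr (mxfun M) = 0.
  have -> : map_mx (@ratr R) (mxfun M) = mxfun (fun x y => ratr (M x y)).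
    by apply/matrixP => i k; rewrite !mxE.
  by apply/rowP => j; rewrite -(enum_valK j) rowfun_mulmx mM mxE.
have v_gt0 i : 0 < rowfun m 0 i by rewrite mxE.
have [w wS w_gt0] := rat_kermx_pos vS v_gt0.
exists (fun x => w 0 (enum_rank x)) => // y.
have wE : rowfun (fun x => w 0 (enum_rank x)) = w.
  by apply/rowP => i; rewrite !mxE enum_valK.
by rewrite -rowfun_mulmx wE wS mxE.
Qed.

Lemma rat_scale_int (I : finType) (w : I -> rat) :
  exists2 D : rat, 0 < D & exists a : I -> int, forall i, (a i)%:~R = w i * D.
Proof.
exists (\prod_i denq (w i))%:~R; first by rewrite ltr0z prodr_gt0.
exists (fun i => numq (w i) * \prod_(j | j != i) denq (w j)) => i.
by rewrite [in RHS](bigD1 i) //= !intrM numqE mulrA.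
Qed.

Section ReactionNetwork.

Variables (X Rn : finType) (sminus splus : X -> Rn -> nat).
Local Notation S := (stoich sminus splus).

Lemma sf_instance_conservative (Atoms : finType) (a : Atoms -> X -> nat) :
  is_sf_instance sminus splus a -> conservative sminus splus.
Proof.
case=> a_nz aS; exists (fun x => \sum_i (a i x)%:R); split.
  move=> x; have [i /eqP aix_nz] := a_nz x.
  by rewrite (bigD1 i) //= ltr_pwDl ?sumr_ge0 // ltr0n lt0n.
move=> r; under eq_bigr do rewrite mulr_suml.
rewrite exchange_big /= big1 // => i _.
rewrite -[RHS](rmorph0 intr) -(aS i r) rmorph_sum.
by apply: eq_bigr => x _; rewrite rmorphM.
Qed.

Lemma conservative_pos_int_law : conservative sminus splus ->
  exists2 a : X -> nat, (forall x, a x <> 0%N) & forall r, \sum_x (a x)%:Z * S x r = 0.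
Proof.
case=> m [m_gt0 mS].
have mS_rat r : \sum_x m x * ratr (S x r)%:~R = 0.
  by under eq_bigr do rewrite ratr_int; exact: mS.
have [w w_gt0 wS] := pos_rat_left_kernel m_gt0 mS_rat.
have [D D_gt0 [a aE]] := rat_scale_int w.
have a_gt0 x : 0 < a x by rewrite -(ltr0z rat) aE mulr_gt0.
exists (fun x => `|a x|%N) => [x|r]; first by apply/eqP; rewrite absz_eq0 gt_eqF.
apply: (@intr_inj rat); rewrite rmorph_sum rmorph0.
transitivity (D * \sum_x w x * (S x r)%:~R); last by rewrite wS mulr0.
rewrite mulr_sumr; apply: eq_bigr => x _.
by rewrite gtz0_abs // rmorphM /= aE mulrAC mulrC.
Qed.

End ReactionNetwork.

Theorem proposition8 (X Rn : finType) (sminus splus : X -> Rn -> nat) :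
  (0 < #|X|)%N -> (0 < #|Rn|)%N -> closed_RN sminus splus ->
  (admits_sf_instance sminus splus <-> conservative sminus splus).
Proof.
move=> _ _ _; split=> [[Atoms [a [_ a_sf]]]|cons].
  exact: sf_instance_conservative a_sf.
have [a a_nz aS] := conservative_pos_int_law cons.
exists unit, (fun _ => a); split; first by rewrite card_unit.
by split=> [x|_ r]; [exists tt | exact: aS].
Qed.
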